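(* Let $d\ge1$ and let $D$ be a Newton diagram in $2$ variables whose support is exactly $\{(a,b)\in\mathbb N_0^2: a+b<d\}$. Then there exists a Newton diagram $\tilde D$ with the same support such that $\tilde D(a,b)=D(a,b)$ for all $(a,b)$ with $a+b=d-1$, and $SC(\tilde D)=\frac{d+1}{2}$.
   Context: For $m\in\mathbb Z^n$ write $|m|=m_1+\dots+m_n$; $e_1,\dots,e_n$ is the standard basis. A Newton diagram in $n$ variables is a function $D\colon\mathbb Z^n\to\{0,P,N\}$ ($P,N$ formal symbols) whose support $K=D^{-1}(\{P,N\})$ is a finite nonempty subset of $\mathbb N_0^n$. For $a\in\mathbb Z^n$ let $E(a)=\{a,a-e_1,\dots,a-e_n\}$; $E(a)$ is a node of $D$ if the image $D(E(a))$ equals $\{P\}$, $\{N\}$, $\{0,P\}$ or $\{0,N\}$. For $n=2$: a node $E(a)$ is an interior node if no point of $E(a)$ has $D$-value $0$, an edge node if exactly one does, a vertex node if exactly two do; a vertex node is a bottom node if its two $0$-points are $a-e_1$ and $a-e_2$. The weighted surface count is $SC(D)=(\#\text{interior nodes})+\tfrac12\big((\#\text{edge nodes})+(\#\text{vertex nodes})-(\#\text{bottom nodes})\big)$. *)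

From Stdlib Require Import ZArith QArith List Bool.
Import ListNotations.
Open Scope Z_scope.

Inductive dval := V0 | VP | VN.

Definition dval_eqb (x y : dval) : bool :=
  match x, y with
  | V0, V0 | VP, VP | VN, VN => true
  | _, _ => false
  end.

Definition diagram2 := Z -> Z -> dval.

Definition has_triangle_support (d : nat) (D : diagram2) : Prop :=
  forall a b : Z, D a b <> V0 <-> (0 <= a /\ 0 <= b /\ a + b < Z.of_nat d).

(* Image D(E(a)) for a = (a1,a2): values at a, a-e1, a-e2. *)
Definition img (D : diagram2) (a1 a2 : Z) : list dval :=
  [D a1 a2; D (a1 - 1) a2; D a1 (a2 - 1)].

Definition memb (v : dval) (l : list dval) : bool := existsb (dval_eqb v) l.

Definition set_eqb (l s : list dval) : bool :=
  forallb (fun v => memb v s) l && forallb (fun v => memb v l) s.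

Definition is_node (D : diagram2) (a1 a2 : Z) : bool :=
  let I := img D a1 a2 in
  set_eqb I [VP] || set_eqb I [VN] || set_eqb I [V0; VP] || set_eqb I [V0; VN].

Definition is0 (v : dval) : bool := dval_eqb v V0.

(* number of points of E(a) with D-value 0 (the three points are distinct) *)
Definition nzeros (D : diagram2) (a1 a2 : Z) : nat :=
  List.length (filter is0 (img D a1 a2)).

Definition interior_node D a1 a2 := is_node D a1 a2 && Nat.eqb (nzeros D a1 a2) 0.
Definition edge_node D a1 a2 := is_node D a1 a2 && Nat.eqb (nzeros D a1 a2) 1.
Definition vertex_node D a1 a2 := is_node D a1 a2 && Nat.eqb (nzeros D a1 a2) 2.
Definition bottom_node D a1 a2 :=
  vertex_node D a1 a2 && is0 (D (a1 - 1) a2) && is0 (D a1 (a2 - 1)).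

(* The box [0,M]^2 of lattice points. If the support of D lies in
   [0,M-1]^2, every node E(a) has a in this box (a node contains a point
   of the support, which is a, a+e1 or a+e2 away from a).  *)
Definition box (M : nat) : list (Z * Z) :=
  list_prod (map Z.of_nat (seq 0 (S M))) (map Z.of_nat (seq 0 (S M))).

Definition count_box (M : nat) (f : Z -> Z -> bool) : Z :=
  Z.of_nat (List.length (filter (fun p => f (fst p) (snd p)) (box M))).

Definition SC (M : nat) (D : diagram2) : Q :=
  inject_Z (count_box M (interior_node D))
  + (1 # 2) * inject_Z (count_box M (edge_node D) + count_box M (vertex_node D)
                         - count_box M (bottom_node D)).

(* Let s_i = D(i, d-1-i) be the values of D on the top diagonal a + b = d-1.
   The diagram Dt fills each column i of the triangle downwards from s_i
   with alternating signs: Dt(i, j) = (-1)^(d-1-i-j) s_i for i, j >= 0,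
   i + j < d.

   Counting each node with twice its weight in SC (2 for interior, 1 for edge
   and vertex nodes, 0 for bottom nodes), 2 SC is the total node weight over
   the box [0,d]^2 (SC_as_total_weight).  In column i:
   - strictly between j = 0 and the point j = d-i just above the diagonal,
     Dt(i,j) and Dt(i,j-1) are nonzero of opposite signs: no node;
   - above j = d-i both neighbours a-e1 and a-e2 vanish: at most a bottom node;
   - the end nodes E(i,0) and E(i,d-i) have total weight exactly 1; for
     0 < i < d exactly one of them is an edge node, according to whether
     s_(i-1) and s_i agree.
   Hence every column has weight 1 and 2 SC = d + 1. *)

From Stdlib Require Import ZArith QArith Lia List Qfield.
Import ListNotations.
Open Scope Z_scope.

Fixpoint zsum {A : Type} (f : A -> Z) (l : list A) : Z :=
  match l with [] => 0 | x :: l => f x + zsum f l end.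

Lemma zsum_app {A : Type} (f : A -> Z) (l1 l2 : list A) :
  zsum f (l1 ++ l2) = zsum f l1 + zsum f l2.
Proof. induction l1 as [|x l1 IH]; simpl; [|rewrite IH]; lia. Qed.

Lemma zsum_map {A B : Type} (f : B -> Z) (g : A -> B) (l : list A) :
  zsum f (map g l) = zsum (fun x => f (g x)) l.
Proof. induction l as [|x l IH]; simpl; [|rewrite IH]; lia. Qed.

Lemma zsum_list_prod {A B : Type} (f : A * B -> Z) (X : list A) (Y : list B) :
  zsum f (list_prod X Y) = zsum (fun x => zsum (fun y => f (x, y)) Y) X.
Proof.
  induction X as [|x X IH]; simpl; [lia|].
  rewrite zsum_app, zsum_map, IH. reflexivity.
Qed.

Lemma zsum_ext_in {A : Type} (f g : A -> Z) (l : list A) :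
  (forall x, In x l -> f x = g x) -> zsum f l = zsum g l.
Proof.
  induction l as [|x l IH]; simpl; intros Hfg; [reflexivity|].
  rewrite Hfg, IH by auto. reflexivity.
Qed.

Lemma zsum_add {A : Type} (f g : A -> Z) (l : list A) :
  zsum (fun x => f x + g x) l = zsum f l + zsum g l.
Proof. induction l as [|x l IH]; simpl; [|rewrite IH]; lia. Qed.

Lemma zsum_sub {A : Type} (f g : A -> Z) (l : list A) :
  zsum (fun x => f x - g x) l = zsum f l - zsum g l.
Proof. induction l as [|x l IH]; simpl; [|rewrite IH]; lia. Qed.

Lemma zsum_scale {A : Type} (c : Z) (f : A -> Z) (l : list A) :
  zsum (fun x => c * f x) l = c * zsum f l.
Proof. induction l as [|x l IH]; simpl; [|rewrite IH]; lia. Qed.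

Lemma zsum_one {A : Type} (l : list A) : zsum (fun _ => 1) l = Z.of_nat (length l).
Proof. induction l as [|x l IH]; cbn [zsum length]; [|rewrite IH, Nat2Z.inj_succ]; lia. Qed.

Definition b2z (b : bool) : Z := if b then 1 else 0.

Lemma count_as_zsum {A : Type} (f : A -> bool) (l : list A) :
  Z.of_nat (length (filter f l)) = zsum (fun x => b2z (f x)) l.
Proof.
  induction l as [|x l IH]; cbn [filter zsum]; [reflexivity|].
  destruct (f x); cbn [length b2z]; rewrite <- IH; lia.
Qed.

Definition zrange (m : nat) : list Z := map Z.of_nat (seq 0 m).

Lemma in_zrange (m : nat) (j : Z) : In j (zrange m) -> 0 <= j < Z.of_nat m.
Proof.
  unfold zrange. intros Hj. apply in_map_iff in Hj as [x [<- Hx]].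
  apply in_seq in Hx. lia.
Qed.

Lemma zsum_single (m : nat) (k v : Z) :
  zsum (fun j => if j =? k then v else 0) (zrange m)
  = if (0 <=? k) && (k <? Z.of_nat m) then v else 0.
Proof.
  induction m as [|m IH].
  - simpl. destruct (Z.leb_spec 0 k), (Z.ltb_spec k 0); simpl; lia.
  - unfold zrange in *. rewrite seq_S, map_app, zsum_app, IH, Nat2Z.inj_succ.
    simpl. destruct (Z.eqb_spec (Z.of_nat m) k), (Z.leb_spec 0 k),
      (Z.ltb_spec k (Z.of_nat m)), (Z.ltb_spec k (Z.succ (Z.of_nat m)));
      simpl; lia.
Qed.

Lemma zsum_two_points (m : nat) (k a b : Z) : (1 <= m)%nat ->
  zsum (fun j => if j =? 0 then a else if j =? k then b else 0) (zrange m)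
  = a + (if (0 <? k) && (k <? Z.of_nat m) then b else 0).
Proof.
  intros Hm.
  rewrite (zsum_ext_in _ (fun j => (if j =? 0 then a else 0)
                      + (if j =? k then (if k =? 0 then 0 else b) else 0))).
  - rewrite zsum_add, !zsum_single.
    destruct (Z.leb_spec 0 k), (Z.ltb_spec 0 k), (Z.ltb_spec k (Z.of_nat m)),
      (Z.eqb_spec k 0), (Z.ltb_spec 0 (Z.of_nat m)); simpl; lia.
  - intros j _. destruct (Z.eqb_spec j 0), (Z.eqb_spec j k), (Z.eqb_spec k 0); lia.
Qed.

(* Twice the contribution of the node E(i,j) to the surface count. *)
Definition node_weight (D : diagram2) (i j : Z) : Z :=
  2 * b2z (interior_node D i j) + b2z (edge_node D i j)
  + b2z (vertex_node D i j) - b2z (bottom_node D i j).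

Definition total_weight (M : nat) (D : diagram2) : Z :=
  zsum (fun p => node_weight D (fst p) (snd p)) (box M).

Lemma SC_as_total_weight (M : nat) (D : diagram2) :
  (SC M D == inject_Z (total_weight M D) / inject_Z 2)%Q.
Proof.
  unfold SC, total_weight, count_box, node_weight.
  rewrite !count_as_zsum, !zsum_sub, !zsum_add, zsum_scale.
  rewrite <- !Z.add_opp_r, !inject_Z_plus, !inject_Z_opp, inject_Z_mult.
  field.
Qed.

Definition opposite (x : dval) : dval :=
  match x with VP => VN | VN => VP | V0 => V0 end.

Definition orient (b : bool) (x : dval) : dval := if b then x else opposite x.

Lemma orient_nonzero (b : bool) (x : dval) : x <> V0 -> orient b x <> V0.
Proof. destruct b, x; simpl; congruence. Qed.

Ltac unfold_node_weight :=
  unfold node_weight, bottom_node, interior_node, edge_node, vertex_node,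
    is_node, nzeros, img.

Lemma weight_sign_change (D : diagram2) (i j : Z) (b : bool) (s : dval) :
  s <> V0 -> D i j = orient b s -> D i (j - 1) = orient (negb b) s ->
  node_weight D i j = 0.
Proof.
  intros Hs Hij Hlow. unfold_node_weight. rewrite Hij, Hlow.
  destruct (D (i - 1) j), b, s; try reflexivity; congruence.
Qed.

(* Both neighbours vanish: no node, or a bottom node. *)
Lemma weight_zero_neighbours (D : diagram2) (i j : Z) :
  D (i - 1) j = V0 -> D i (j - 1) = V0 -> node_weight D i j = 0.
Proof.
  intros Hleft Hlow. unfold_node_weight. rewrite Hleft, Hlow.
  destruct (D i j); reflexivity.
Qed.

(* Only the lower neighbour is nonzero: a vertex node which is not a bottom node. *)
Lemma weight_lower_only (D : diagram2) (i j : Z) :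
  D i j = V0 -> D (i - 1) j = V0 -> D i (j - 1) <> V0 -> node_weight D i j = 1.
Proof.
  intros Hij Hleft Hlow. unfold_node_weight. rewrite Hij, Hleft.
  destruct (D i (j - 1)); try reflexivity; congruence.
Qed.

(* Only the left neighbour is nonzero: a vertex node which is not a bottom node. *)
Lemma weight_left_only (D : diagram2) (i j : Z) :
  D i j = V0 -> D (i - 1) j <> V0 -> D i (j - 1) = V0 -> node_weight D i j = 1.
Proof.
  intros Hij Hleft Hlow. unfold_node_weight. rewrite Hij, Hlow.
  destruct (D (i - 1) j); try reflexivity; congruence.
Qed.

(* The bottom node (i,0) and the node (i,k) just above a column: exactly one
   of them is an edge node, decided by whether t and s agree. *)
Lemma weight_bottom_top (D : diagram2) (i k : Z) (b : bool) (s t : dval) :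
  s <> V0 -> t <> V0 ->
  D i 0 = orient b s -> D (i - 1) 0 = orient (negb b) t -> D i (0 - 1) = V0 ->
  D i k = V0 -> D (i - 1) k = t -> D i (k - 1) = s ->
  node_weight D i 0 + node_weight D i k = 1.
Proof.
  intros Hs Ht Hb1 Hb2 Hb3 Ht1 Ht2 Ht3. unfold_node_weight.
  rewrite Hb1, Hb2, Hb3, Ht1, Ht2, Ht3.
  destruct b, s, t; try reflexivity; congruence.
Qed.

Definition alternating_extension (d : nat) (D : diagram2) : diagram2 :=
  fun i j =>
    if (0 <=? i) && (0 <=? j) && (i + j <? Z.of_nat d)
    then orient (Z.even (Z.of_nat d - 1 - i - j)) (D i (Z.of_nat d - 1 - i))
    else V0.

Section AlternatingExtension.

Variable d : nat.
Variable D : diagram2.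
Hypothesis hD : has_triangle_support d D.

Let n := Z.of_nat d.
Let Dt := alternating_extension d D.

Lemma Dt_inside (i j : Z) : 0 <= i -> 0 <= j -> i + j < n ->
  Dt i j = orient (Z.even (n - 1 - i - j)) (D i (n - 1 - i)).
Proof.
  intros. unfold Dt, alternating_extension. fold n.
  destruct (Z.leb_spec 0 i), (Z.leb_spec 0 j), (Z.ltb_spec (i + j) n);
    simpl; [reflexivity|lia..].
Qed.

Lemma Dt_outside (i j : Z) : ~ (0 <= i /\ 0 <= j /\ i + j < n) -> Dt i j = V0.
Proof.
  intros. unfold Dt, alternating_extension. fold n.
  destruct (Z.leb_spec 0 i), (Z.leb_spec 0 j), (Z.ltb_spec (i + j) n);
    simpl; [lia|reflexivity..].
Qed.

Lemma top_value_nonzero (i : Z) : 0 <= i < n -> D i (n - 1 - i) <> V0.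
Proof. intros. apply hD. unfold n in *. lia. Qed.

Lemma Dt_support : has_triangle_support d Dt.
Proof.
  intros a b. fold n. split.
  - intros Hab. destruct (Z.le_gt_cases 0 a), (Z.le_gt_cases 0 b),
      (Z.lt_ge_cases (a + b) n); auto; exfalso; apply Hab, Dt_outside; lia.
  - intros Hab. rewrite Dt_inside by lia.
    apply orient_nonzero, top_value_nonzero. lia.
Qed.

Lemma Dt_top_diagonal (a b : Z) : 0 <= a -> 0 <= b -> a + b = n - 1 ->
  Dt a b = D a b.
Proof.
  intros. rewrite Dt_inside by lia.
  replace (n - 1 - a - b) with 0 by lia.
  replace (n - 1 - a) with b by lia. reflexivity.
Qed.

Lemma weight_off_column_ends (i j : Z) : 0 <= i <= n -> 0 <= j ->
  j <> 0 -> j <> n - i -> node_weight Dt i j = 0.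
Proof.
  intros Hi Hj Hj0 Hjtop.
  destruct (Z_lt_ge_dec (i + j) n).
  - apply (weight_sign_change _ _ _ (Z.even (n - 1 - i - j)) (D i (n - 1 - i))).
    + apply top_value_nonzero. lia.
    + apply Dt_inside; lia.
    + rewrite Dt_inside by lia.
      replace (n - 1 - i - (j - 1)) with (Z.succ (n - 1 - i - j)) by lia.
      rewrite Z.even_succ, <- Z.negb_even. reflexivity.
  - apply weight_zero_neighbours; apply Dt_outside; lia.
Qed.

Lemma column_end_weights (i : Z) : 0 <= i <= n -> 1 <= n ->
  node_weight Dt i 0 + (if (0 <? n - i) && (n - i <? n + 1)
                        then node_weight Dt i (n - i) else 0) = 1.
Proof.
  intros Hi Hn.
  destruct (Z.eq_dec i n) as [->|Hin].
  - rewrite Z.sub_diag. simpl. rewrite Z.add_0_r.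
    apply weight_left_only; [apply Dt_outside; lia| |apply Dt_outside; lia].
    rewrite Dt_inside by lia. apply orient_nonzero, top_value_nonzero. lia.
  - destruct (Z.ltb_spec 0 (n - i)), (Z.ltb_spec (n - i) (n + 1)); [|lia..].
    simpl. destruct (Z.eq_dec i 0) as [->|Hi0].
    + rewrite weight_zero_neighbours by (apply Dt_outside; lia).
      apply weight_lower_only; try (apply Dt_outside; lia).
      rewrite Dt_inside by lia. apply orient_nonzero, top_value_nonzero. lia.
    + apply (weight_bottom_top _ _ _ (Z.even (n - 1 - i))
               (D i (n - 1 - i)) (D (i - 1) (n - 1 - (i - 1))));
        try (apply top_value_nonzero; lia);
        try (apply Dt_outside; lia).
      * rewrite Dt_inside by lia. f_equal. f_equal. lia.
      * rewrite Dt_inside by lia.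
        replace (n - 1 - (i - 1) - 0) with (Z.succ (n - 1 - i)) by lia.
        rewrite Z.even_succ, <- Z.negb_even. reflexivity.
      * rewrite Dt_inside by lia. replace (n - 1 - (i - 1) - (n - i)) with 0 by lia.
        reflexivity.
      * rewrite Dt_inside by lia. replace (n - 1 - i - (n - i - 1)) with 0 by lia.
        reflexivity.
Qed.

Lemma column_weight (i : Z) : 0 <= i <= n -> 1 <= n ->
  zsum (fun j => node_weight Dt i j) (zrange (S d)) = 1.
Proof.
  intros Hi Hn.
  rewrite (zsum_ext_in _ (fun j => if j =? 0 then node_weight Dt i 0
                          else if j =? n - i then node_weight Dt i (n - i) else 0)).
  - rewrite zsum_two_points by lia. rewrite Nat2Z.inj_succ, <- Z.add_1_r.
    apply column_end_weights; assumption.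
  - intros j Hj. apply in_zrange in Hj.
    destruct (Z.eqb_spec j 0) as [->|Hj0]; [reflexivity|].
    destruct (Z.eqb_spec j (n - i)) as [->|Hjtop]; [reflexivity|].
    apply weight_off_column_ends; lia.
Qed.

Lemma Dt_total_weight : (1 <= d)%nat -> total_weight d Dt = n + 1.
Proof.
  intros Hd. unfold total_weight.
  change (box d) with (list_prod (zrange (S d)) (zrange (S d))).
  rewrite zsum_list_prod, (zsum_ext_in _ (fun _ => 1)).
  - rewrite zsum_one. unfold zrange. rewrite length_map, length_seq. unfold n. lia.
  - intros i Hi. apply in_zrange in Hi. rewrite Nat2Z.inj_succ in Hi.
    cbn [fst snd]. apply column_weight; unfold n in *; lia.
Qed.

End AlternatingExtension.

Theorem mainTheorem9 (d : nat) (hd : (1 <= d)%nat) (D : diagram2)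
  (hD : has_triangle_support d D) :
  exists Dt : diagram2,
    has_triangle_support d Dt /\
    (forall a b : Z, (0 <= a)%Z -> (0 <= b)%Z -> (a + b = Z.of_nat d - 1)%Z ->
       Dt a b = D a b) /\
    (SC d Dt == inject_Z (Z.of_nat d + 1) / inject_Z 2)%Q.
Proof.
  exists (alternating_extension d D). split; [|split].
  - exact (Dt_support d D hD).
  - exact (Dt_top_diagonal d D).
  - rewrite <- (Dt_total_weight d D hD hd). apply SC_as_total_weight.
Qed.
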